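(* In the standing setup with a single fluid, and with $t_{\mathrm b},\xi_0,t_0$ as in the time-interval setup, write $h_{\mathrm b}=h(t_{\mathrm b})$, $x_{\mathrm b}=x(t_{\mathrm b})$. Then for all $t\in[t_{\mathrm b},t_0]$, $$|x(t)|\ \le\ \frac{1}{\big[1+\xi_0h_{\mathrm b}(t-t_{\mathrm b})\big]^{\frac{1}{\xi_0}-1}}\Big[|x_{\mathrm b}|-\frac{\sqrt2\,c\,l}{h_{\mathrm b}}\Big]+\sqrt2\,c\,l\Big[\xi_0(t-t_{\mathrm b})+\frac{1}{h_{\mathrm b}}\Big].$$
   Context: Standing setup. Fix real constants $c>0$ and $l>0$, a nonempty finite index set $A$, and constants $w_\alpha\in[-1,1]$ for $\alpha\in A$. Let $I\subseteq\mathbb{R}$ be an interval and let $x,y_{\mathrm r},y_{\mathrm i},h,z_\alpha$ ($\alpha\in A$) be real $C^1$ functions of $t\in I$ with $h>0$ and $z_\alpha\ge 0$. Define $\xi(t)=x(t)^2+\sum_{\beta\in A}\frac{1+w_\beta}{2}z_\beta(t)^2$. Assume that on $I$: $\dot x=\big[-x+4c\,y_{\mathrm r}y_{\mathrm i}+x\,\xi\big]h$, $\dot y_{\mathrm r}=\big[\xi\,y_{\mathrm r}-c\,x\,y_{\mathrm i}\big]h$, $\dot y_{\mathrm i}=\big[\xi\,y_{\mathrm i}+c\,x\,y_{\mathrm r}\big]h$, $\dot z_\alpha=\big[-\tfrac{1+w_\alpha}{2}+\xi\big]z_\alpha h$, $\dot h=-\xi h^2$, together with the constraints $x^2+4y_{\mathrm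 r}^2+\sum_{\beta\in A}z_\beta^2=1$ and $y_{\mathrm r}^2+y_{\mathrm i}^2=\frac{l^2}{2h^2}$. Single fluid: $A$ has exactly one element; write $z$ and $w$ for $z_\alpha$ and $w_\alpha$. Time-interval setup: let $t_{\mathrm b}\in I$, $\xi_{\mathrm b}:=\xi(t_{\mathrm b})$, and let $\xi_0$ be a real number with $\xi_0>0$ and $\xi_{\mathrm b}\le\xi_0\le\frac{1+w}{2}$. Assume the set $\{t\in I:\ t\ge t_{\mathrm b},\ \xi(t)=\xi_0\}$ is nonempty and let $t_0$ be its minimum (so $\xi(t)\le\xi_0$ for all $t\in[t_{\mathrm b},t_0]$); put $\Delta t_{\mathrm b0}=t_0-t_{\mathrm b}$. *)

From Stdlib Require Import Reals Lra.
From Coquelicot Require Import Coquelicot.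
Open Scope R_scope.

Definition is_interval (I : R -> Prop) : Prop :=
  forall a b c, I a -> I c -> a <= b -> b <= c -> I b.

Definition has_deriv_in (I : R -> Prop) (f : R -> R) (t d : R) : Prop :=
  filterlim (fun s => (f s - f t) / (s - t))
    (within (fun s => I s /\ s <> t) (locally t)) (locally d).

Definition C1_on (I : R -> Prop) (f f' : R -> R) : Prop :=
  (forall t, I t -> has_deriv_in I f t (f' t)) /\
  (forall t, I t -> filterlim f' (within I (locally t)) (locally (f' t))).

From Stdlib Require Import Reals Lra.
From Coquelicot Require Import Coquelicot.
Open Scope R_scope.

(* Before [t0] one has [xi <= xi0], so [h' = - xi h^2] gives [(1/h)' <= xi0], i.e.
   [h >= h_b / (1 + xi0 h_b (t - t_b))].  The constraints bound the forcing term
   [4 c y_r y_i h] by [sqrt 2 c l], so [x' = (xi - 1) h x + forcing] is a damped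
   equation whose damping rate [(1 - xi) h] is at least
   [(1 - xi0) h_b / (1 + xi0 h_b (t - t_b))].  Comparing [|x|] with the solution of
   the corresponding linear equation yields the bound. *)

Definition continuous_in_Icc (a b : R) (f : R -> R) (s : R) : Prop :=
  filterlim f (within (fun u => a <= u <= b) (locally s)) (locally (f s)).

Lemma continuous_in_IccP a b f s :
  continuous_in_Icc a b f s <->
  forall eps, 0 < eps -> exists delta, 0 < delta /\
    forall u, a <= u <= b -> Rabs (u - s) < delta -> Rabs (f u - f s) < eps.
Proof.
  split.
  - intros H eps Heps.
    destruct (proj1 (filterlim_locally _ _) H (mkposreal eps Heps)) as [d Hd].
    exists d; split; [apply cond_pos|].
    intros u Hu Hus; exact (Hd u Hus Hu).
  - intros H; apply filterlim_locally; intros eps.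
    destruct (H eps (cond_pos eps)) as [d [Hd H']].
    exists (mkposreal d Hd); intros u Hus Hu; exact (H' u Hu Hus).
Qed.

Lemma continuous_in_Icc_of_continuous a b f s :
  continuous f s -> continuous_in_Icc a b f s.
Proof.
  intros H; eapply filterlim_filter_le_1; [apply filter_le_within | exact H].
Qed.

Lemma continuous_of_ex_derive (g : R -> R) y : ex_derive g y -> continuous g y.
Proof. exact (ex_derive_continuous (K := R_AbsRing) (V := R_NormedModule) g y). Qed.

Lemma continuous_in_Icc_plus a b f g s :
  continuous_in_Icc a b f s -> continuous_in_Icc a b g s ->
  continuous_in_Icc a b (fun u => f u + g u) s.
Proof.
  intros Hf Hg.
  exact (filterlim_comp_2 f g Rplus Hf Hg
    (filterlim_plus (K := R_AbsRing) (V := R_NormedModule) (f s) (g s))).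
Qed.

Lemma continuous_in_Icc_mult a b f g s :
  continuous_in_Icc a b f s -> continuous_in_Icc a b g s ->
  continuous_in_Icc a b (fun u => f u * g u) s.
Proof.
  intros Hf Hg.
  exact (filterlim_comp_2 f g Rmult Hf Hg
    (filterlim_mult (K := R_AbsRing) (f s) (g s))).
Qed.

Lemma continuous_in_Icc_comp a b f g s :
  continuous_in_Icc a b f s -> continuous g (f s) ->
  continuous_in_Icc a b (fun u => g (f u)) s.
Proof. intros Hf Hg; exact (filterlim_comp _ _ _ f g _ _ _ Hf Hg). Qed.

Lemma continuous_in_Icc_sub a b a' b' f s :
  a <= a' -> b' <= b -> continuous_in_Icc a b f s -> continuous_in_Icc a' b' f s.
Proof.
  intros Ha Hb H; apply continuous_in_IccP; intros eps Heps.
  destruct (proj1 (continuous_in_IccP _ _ _ _) H eps Heps) as [d [Hd H']].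
  exists d; split; [exact Hd|]; intros u Hu; apply H'; lra.
Qed.

Lemma has_deriv_in_continuous_in_Icc I a b f s d :
  (forall u, a <= u <= b -> I u) -> has_deriv_in I f s d ->
  continuous_in_Icc a b f s.
Proof.
  intros HI H; apply continuous_in_IccP; intros eps Heps.
  destruct (proj1 (filterlim_locally _ _) H (mkposreal 1 Rlt_0_1)) as [r Hr].
  assert (Hd : 0 < Rabs d + 1) by (pose proof (Rabs_pos d); lra).
  exists (Rmin r (eps / (Rabs d + 1))); split.
  { apply Rmin_pos; [apply cond_pos | apply Rdiv_lt_0_compat; lra]. }
  intros u Hu Hus.
  destruct (Req_dec u s) as [-> | Hne].
  { rewrite Rminus_eq_0, Rabs_R0; lra. }
  assert (Hq : Rabs ((f u - f s) / (u - s) - d) < 1).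
  { apply (Hr u); [apply Rlt_le_trans with (1 := Hus); apply Rmin_l | split; auto]. }
  assert (Hus' : Rabs (u - s) * (Rabs d + 1) < eps).
  { apply Rlt_le_trans with (eps / (Rabs d + 1) * (Rabs d + 1)); [|right; field; lra].
    apply Rmult_lt_compat_r; [lra|].
    apply Rlt_le_trans with (1 := Hus); apply Rmin_r. }
  replace (f u - f s) with ((f u - f s) / (u - s) * (u - s)) by (field; lra).
  rewrite Rabs_mult.
  pose proof (Rabs_triang_inv ((f u - f s) / (u - s)) d).
  pose proof (Rabs_pos (u - s)); nra.
Qed.

Lemma has_deriv_in_is_derive I f t d r :
  0 < r -> (forall u, Rabs (u - t) < r -> I u) -> has_deriv_in I f t d ->
  is_derive f t d.
Proof.
  intros Hr HI H; apply is_derive_Reals; intros eps Heps.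
  destruct (proj1 (filterlim_locally _ _) H (mkposreal eps Heps)) as [d1 Hd1].
  assert (Hp : 0 < Rmin d1 r) by (apply Rmin_pos; [apply cond_pos | lra]).
  exists (mkposreal _ Hp); intros k Hk0 Hk; simpl in Hk.
  assert (Hk' : Rabs (t + k - t) < Rmin d1 r) by (replace (t + k - t) with k by ring; exact Hk).
  replace k with (t + k - t) at 2 by ring.
  apply (Hd1 (t + k)); [apply Rlt_le_trans with (1 := Hk'); apply Rmin_l|].
  split; [apply HI; apply Rlt_le_trans with (1 := Hk'); apply Rmin_r | lra].
Qed.

Lemma C1_on_continuous_in_Icc I f f' a b : is_interval I -> I a -> I b -> C1_on I f f' ->
  forall s, a <= s <= b -> continuous_in_Icc a b f s.
Proof.
  intros HI Ia Ib [Hd _] s Hs.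
  apply has_deriv_in_continuous_in_Icc with I (f' s);
    [intros u Hu | apply Hd]; apply (HI a _ b); tauto.
Qed.

Lemma C1_on_is_derive I f f' a b : is_interval I -> I a -> I b -> C1_on I f f' ->
  forall s, a < s < b -> is_derive f s (f' s).
Proof.
  intros HI Ia Ib [Hd _] s Hs.
  apply has_deriv_in_is_derive with I (Rmin (s - a) (b - s));
    [apply Rmin_pos; lra | | apply Hd, (HI a _ b); auto; lra].
  intros u Hu; pose proof (Rabs_def2 _ _ Hu).
  pose proof (Rmin_l (s - a) (b - s)); pose proof (Rmin_r (s - a) (b - s)).
  apply (HI a _ b); auto; lra.
Qed.

Definition clamp (a b s : R) : R := Rmax a (Rmin b s).

Lemma clamp_in a b s : a <= b -> a <= clamp a b s <= b.
Proof. intros; unfold clamp, Rmax, Rmin; repeat destruct Rle_dec; lra. Qed.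

Lemma clamp_id a b s : a <= s <= b -> clamp a b s = s.
Proof. intros; unfold clamp, Rmax, Rmin; repeat destruct Rle_dec; lra. Qed.

Lemma clamp_1_lipschitz a b s u : Rabs (clamp a b u - clamp a b s) <= Rabs (u - s).
Proof.
  unfold clamp, Rmax, Rmin; repeat destruct Rle_dec; unfold Rabs;
    repeat destruct Rcase_abs; lra.
Qed.

Lemma continuity_clamp a b f : a <= b ->
  (forall s, a <= s <= b -> continuous_in_Icc a b f s) ->
  continuity (fun u => f (clamp a b u)).
Proof.
  intros Hab Hf x; apply continuity_pt_filterlim, filterlim_locally; intros eps.
  destruct (proj1 (continuous_in_IccP _ _ _ _) (Hf _ (clamp_in a b x Hab)) eps
    (cond_pos eps)) as [d [Hd H']].
  exists (mkposreal d Hd); intros u Hu.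
  apply H'; [apply clamp_in; exact Hab|].
  apply Rle_lt_trans with (1 := clamp_1_lipschitz a b x u); exact Hu.
Qed.

Lemma nonincreasing_of_derive_nonpos f df a b : a <= b ->
  (forall s, a <= s <= b -> continuous_in_Icc a b f s) ->
  (forall s, a < s < b -> is_derive f s (df s)) ->
  (forall s, a < s < b -> df s <= 0) -> f b <= f a.
Proof.
  intros Hab Hc Hd Hneg.
  set (g := fun u => f (clamp a b u)).
  (* [Rmin 0 (df s)] is still a derivative inside, and is nonpositive at the endpoints too. *)
  destruct (MVT_gen g a b (fun s => Rmin 0 (df s))) as [m [_ Hm]].
  - rewrite Rmin_left, Rmax_right by lra; intros s Hs.
    rewrite Rmin_right by (apply Hneg; exact Hs).
    apply is_derive_ext_loc with f; [|apply Hd; exact Hs].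
    exists (mkposreal _ (Rmin_pos (s - a) (b - s) ltac:(lra) ltac:(lra))).
    intros u Hu; change (Rabs (u - s) < Rmin (s - a) (b - s)) in Hu.
    pose proof (Rmin_l (s - a) (b - s)); pose proof (Rmin_r (s - a) (b - s)).
    pose proof (Rabs_def2 _ _ Hu).
    unfold g; rewrite clamp_id; [reflexivity | lra].
  - intros s _; apply continuity_clamp; assumption.
  - unfold g in Hm; rewrite !clamp_id in Hm by lra.
    pose proof (Rmin_l 0 (df m)); nra.
Qed.

Lemma le_before_first_hit f a b M : a <= b -> f a <= M ->
  (forall s, a <= s <= b -> continuous_in_Icc a b f s) ->
  (forall s, a <= s <= b -> f s = M -> s = b) ->
  forall s, a <= s <= b -> f s <= M.
Proof.
  intros Hab Ha Hc Hfirst s Hs.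
  destruct (Rle_lt_dec (f s) M) as [Hle | Hlt]; [exact Hle | exfalso].
  set (g := fun u => f (clamp a b u)).
  assert (Hg : forall u, a <= u <= b -> g u = f u) by (intros; unfold g; rewrite clamp_id; auto).
  destruct (IVT_gen g a s M) as [z [Hz HzM]].
  - apply continuity_clamp; assumption.
  - rewrite !Hg by lra; unfold Rmin, Rmax; destruct Rle_dec; lra.
  - rewrite Rmin_left, Rmax_right in Hz by lra; rewrite Hg in HzM by lra.
    assert (z = b) by (apply Hfirst; [lra | exact HzM]).
    assert (s = b) by lra; subst; lra.
Qed.

Lemma exists_last_le F a t M : a <= t -> F a <= M -> M < F t ->
  (forall s, a <= s <= t -> continuous_in_Icc a t F s) ->
  exists m, a <= m < t /\ F m <= M /\ forall s, m < s <= t -> M < F s.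
Proof.
  intros Hat Ha Ht Hc.
  set (E := fun s => a <= s <= t /\ F s <= M).
  destruct (completeness E) as [m [Hub Hlub]].
  { exists t; intros s [Hs _]; lra. }
  { exists a; split; [lra | exact Ha]. }
  assert (Ham : a <= m) by (apply Hub; split; [lra | exact Ha]).
  assert (Hmt : m <= t) by (apply Hlub; intros s [Hs _]; lra).
  assert (Habove : forall s, m < s <= t -> M < F s).
  { intros s Hs; destruct (Rle_lt_dec (F s) M) as [Hle | Hlt]; [|exact Hlt].
    assert (s <= m) by (apply Hub; split; [lra | exact Hle]); lra. }
  assert (Hm : F m <= M).
  { destruct (Rle_lt_dec (F m) M) as [Hle | Hlt]; [exact Hle | exfalso].
    destruct (proj1 (continuous_in_IccP _ _ _ _) (Hc m (conj Ham Hmt)) (F m - M))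
      as [d [Hd Hnear]]; [lra|].
    (* near [m] the values stay above [M], so [Rmax a (m - d/2)] is a smaller upper bound of [E] *)
    assert (Hb : m <= Rmax a (m - d / 2)).
    { apply Hlub; intros s [Hs Hs'].
      assert (s <= m) by (apply Hub; split; assumption).
      destruct (Rle_lt_dec s (m - d / 2)) as [H1 | H1].
      - apply Rle_trans with (1 := H1), Rmax_r.
      - assert (Rabs (s - m) < d) by (rewrite Rabs_left1; lra).
        pose proof (Rabs_def2 _ _ (Hnear s Hs ltac:(assumption))); lra. }
    unfold Rmax in Hb; destruct Rle_dec; [lra|].
    assert (m = a) by lra; subst m; lra. }
  exists m; repeat split; try assumption.
  destruct (Req_dec m t) as [-> |]; lra.
Qed.

Lemma le_of_derive_nonpos_above F dF a t M : a <= t -> F a <= M ->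
  (forall s, a <= s <= t -> continuous_in_Icc a t F s) ->
  (forall s, a < s < t -> is_derive F s (dF s)) ->
  (forall s, a < s < t -> M < F s -> dF s <= 0) -> F t <= M.
Proof.
  intros Hat Ha Hc Hd Hneg.
  destruct (Rle_lt_dec (F t) M) as [Hle | Hlt]; [exact Hle | exfalso].
  destruct (exists_last_le F a t M Hat Ha Hlt Hc) as [m [Hm [HFm Habove]]].
  enough (F t <= F m) by lra.
  apply (nonincreasing_of_derive_nonpos F dF m t); [lra | | | ].
  - intros s Hs; apply continuous_in_Icc_sub with a t; [lra | lra | apply Hc; lra].
  - intros s Hs; apply Hd; lra.
  - intros s Hs; apply Hneg; [lra | apply Habove; lra].
Qed.

Lemma Rpower_1_base p : Rpower 1 p = 1.
Proof. unfold Rpower; rewrite ln_1, Rmult_0_r; apply exp_0. Qed.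

Lemma Rpower_ge_1 e p : 1 <= e -> 0 <= p -> 1 <= Rpower e p.
Proof.
  intros He Hp; rewrite <- (Rpower_O e) by lra; apply Rle_Rpower; assumption.
Qed.

Lemma is_derive_Rpower_affine k a p s : 0 < 1 + k * (s - a) ->
  is_derive (fun u => Rpower (1 + k * (u - a)) p) s
    (p * k / (1 + k * (s - a)) * Rpower (1 + k * (s - a)) p).
Proof. intros H; unfold Rpower; auto_derive; [lra | unfold Rminus; field; lra]. Qed.

Lemma weighted_slope_nonpos P L v hh xi xi0 f K hb :
  0 < hb -> 0 < L -> 1 <= P -> 0 < v -> hb / L <= hh -> xi <= xi0 <= 1 -> f <= K ->
  (1 - xi0) * (hb / L) * P * (v - K / hb * L)
    + P * ((xi - 1) * hh * v + f - K / hb * (xi0 * hb)) <= 0.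
Proof.
  intros Hhb HL HP Hv Hhh Hxi Hf.
  replace ((1 - xi0) * (hb / L) * P * (v - K / hb * L)
      + P * ((xi - 1) * hh * v + f - K / hb * (xi0 * hb)))
    with (P * (v * ((1 - xi0) * (hb / L) - (1 - xi) * hh) + (f - K))) by (field; lra).
  assert (0 < hb / L) by (apply Rdiv_lt_0_compat; lra).
  assert ((1 - xi0) * (hb / L) <= (1 - xi) * hh) by nra.
  assert (v * ((1 - xi0) * (hb / L) - (1 - xi) * hh) <= 0) by nra.
  nra.
Qed.

Lemma pos_of_weighted_gt P L v va k :
  1 <= P -> 1 <= L -> 0 <= k -> Rabs va - k < P * (v - k * L) -> 0 < v.
Proof.
  intros HP HL Hk Habove.
  destruct (Rlt_le_dec 0 v) as [Hpos | Hneg]; [exact Hpos | exfalso].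
  assert (k <= k * (P * L)) by (assert (1 <= P * L) by nra; nra).
  pose proof (Rabs_pos va); nra.
Qed.

(* With [L s = 1 + xi0 hb (s - a)] and the weight [P = L ^ (1/xi0 - 1)], which solves
   [P' = (1 - xi0) (hb / L) P], the function [P (v - K L / hb)] cannot increase while it
   exceeds its initial bound [|v a| - K / hb], since [v > 0] there. *)
Lemma damped_forcing_bound (v dv hh xi f : R -> R) a b hb xi0 K :
  0 < xi0 <= 1 -> 0 < hb -> 0 <= K ->
  (forall s, a <= s <= b -> continuous_in_Icc a b v s) ->
  (forall s, a < s < b -> is_derive v s (dv s)) ->
  (forall s, a < s < b -> dv s = (xi s - 1) * hh s * v s + f s) ->
  (forall s, a < s < b -> xi s <= xi0) ->
  (forall s, a < s < b -> hb / (1 + xi0 * hb * (s - a)) <= hh s) ->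
  (forall s, a < s < b -> f s <= K) ->
  forall t, a <= t <= b ->
    v t <= 1 / Rpower (1 + xi0 * hb * (t - a)) (1 / xi0 - 1) * (Rabs (v a) - K / hb)
           + K * (xi0 * (t - a) + 1 / hb).
Proof.
  intros Hxi0 Hhb HK Hvc Hvd Hdv Hxi Hhh Hf t Ht.
  set (L := fun s => 1 + xi0 * hb * (s - a)).
  set (P := fun s => Rpower (L s) (1 / xi0 - 1)).
  assert (HL : forall s, a <= s -> 1 <= L s).
  { intros s Hs; unfold L.
    assert (0 <= xi0 * hb * (s - a)) by (apply Rmult_le_pos; nra); lra. }
  assert (HP : forall s, a <= s -> 1 <= P s).
  { assert (1 <= 1 / xi0) by (apply Rmult_le_reg_r with xi0; [lra|]; field_simplify; lra).
    intros s Hs; apply Rpower_ge_1; [apply HL; exact Hs | lra]. }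
  assert (HPd : forall s, a <= s -> is_derive P s ((1 - xi0) * (hb / L s) * P s)).
  { intros s Hs; pose proof (HL s Hs).
    replace ((1 - xi0) * (hb / L s) * P s)
      with ((1 / xi0 - 1) * (xi0 * hb) / L s * P s) by (field; lra).
    apply is_derive_Rpower_affine; fold (L s); lra. }
  set (M := Rabs (v a) - K / hb).
  assert (HPhi : P t * (v t - K / hb * L t) <= M).
  { apply le_of_derive_nonpos_above with (a := a)
      (F := fun s => P s * (v s - K / hb * L s)) (dF := fun s =>
      (1 - xi0) * (hb / L s) * P s * (v s - K / hb * L s)
      + P s * (dv s - K / hb * (xi0 * hb))); [lra | | | | ].
    - unfold P, L; rewrite Rminus_eq_0, Rmult_0_r, Rplus_0_r, Rpower_1_base.
      pose proof (Rle_abs (v a)); unfold M; lra.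
    - intros s Hs; apply continuous_in_Icc_mult.
      + apply continuous_in_Icc_of_continuous, continuous_of_ex_derive.
        eexists; apply HPd; lra.
      + apply continuous_in_Icc_plus with (f := v) (g := fun u => - (K / hb * L u)).
        * apply continuous_in_Icc_sub with a b; [lra | lra | apply Hvc; lra].
        * apply continuous_in_Icc_of_continuous, continuous_of_ex_derive.
          unfold L; auto_derive; auto.
    - intros s Hs; apply (is_derive_mult P (fun u => v u - K / hb * L u));
        [apply HPd; lra | | exact Rmult_comm].
      apply (is_derive_minus v (fun u => K / hb * L u)); [apply Hvd; lra|].
      unfold L; auto_derive; [auto | ring].
    - intros s Hs Habove.
      pose proof (HL s ltac:(lra)); pose proof (HP s ltac:(lra)).
      rewrite (Hdv s) by lra.
      assert (Hh : hb / L s <= hh s) by (apply Hhh; lra).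
      pose proof (Hxi s ltac:(lra)); pose proof (Hf s ltac:(lra)).
      apply weighted_slope_nonpos; try lra.
      apply (pos_of_weighted_gt (P s) (L s) (v s) (v a) (K / hb)); try assumption.
      apply Rdiv_le_0_compat; lra. }
  pose proof (HP t ltac:(lra)).
  change (Rpower (1 + xi0 * hb * (t - a)) (1 / xi0 - 1)) with (P t).
  replace (K * (xi0 * (t - a) + 1 / hb)) with (K / hb * L t) by (unfold L; field; lra).
  apply Rmult_le_reg_l with (P t); [lra|].
  replace (P t * (1 / P t * M + K / hb * L t)) with (M + P t * (K / hb * L t))
    by (field; lra).
  lra.
Qed.

Lemma abs_damped_forcing_bound (v dv hh xi f : R -> R) a b hb xi0 K :
  0 < xi0 <= 1 -> 0 < hb -> 0 <= K ->
  (forall s, a <= s <= b -> continuous_in_Icc a b v s) ->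
  (forall s, a < s < b -> is_derive v s (dv s)) ->
  (forall s, a < s < b -> dv s = (xi s - 1) * hh s * v s + f s) ->
  (forall s, a < s < b -> xi s <= xi0) ->
  (forall s, a < s < b -> hb / (1 + xi0 * hb * (s - a)) <= hh s) ->
  (forall s, a < s < b -> Rabs (f s) <= K) ->
  forall t, a <= t <= b ->
    Rabs (v t) <= 1 / Rpower (1 + xi0 * hb * (t - a)) (1 / xi0 - 1) * (Rabs (v a) - K / hb)
           + K * (xi0 * (t - a) + 1 / hb).
Proof.
  intros Hxi0 Hhb HK Hvc Hvd Hdv Hxi Hhh Hf t Ht.
  apply Rabs_le; split.
  - rewrite <- (Rabs_Ropp (v a)).
    enough (- v t <= 1 / Rpower (1 + xi0 * hb * (t - a)) (1 / xi0 - 1)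
      * (Rabs (- v a) - K / hb) + K * (xi0 * (t - a) + 1 / hb)) by lra.
    apply (damped_forcing_bound (fun s => - v s) (fun s => - dv s) hh xi (fun s => - f s)
      a b); auto.
    + intros s Hs; apply continuous_in_Icc_comp with (g := Ropp); [apply Hvc; exact Hs|].
      apply continuous_of_ex_derive; auto_derive; auto.
    + intros s Hs; apply (is_derive_opp v), Hvd, Hs.
    + intros s Hs; rewrite Hdv by exact Hs; ring.
    + intros s Hs; apply Rle_trans with (2 := Hf s Hs); rewrite <- Rabs_Ropp; apply RRle_abs.
  - apply (damped_forcing_bound v dv hh xi f a b); auto.
    intros s Hs; apply Rle_trans with (2 := Hf s Hs), RRle_abs.
Qed.

Lemma riccati_lower_bound (h xi : R -> R) a b xi0 : a <= b -> 0 <= xi0 ->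
  (forall s, a <= s <= b -> 0 < h s) ->
  (forall s, a <= s <= b -> continuous_in_Icc a b h s) ->
  (forall s, a < s < b -> is_derive h s (- xi s * h s ^ 2)) ->
  (forall s, a < s < b -> xi s <= xi0) ->
  forall s, a <= s <= b -> h a / (1 + xi0 * h a * (s - a)) <= h s.
Proof.
  intros Hab Hxi0 Hpos Hc Hd Hxi s Hs.
  pose proof (Hpos a ltac:(lra)); pose proof (Hpos s Hs).
  assert (Hinv : / h s - xi0 * s <= / h a - xi0 * a).
  { apply (nonincreasing_of_derive_nonpos (fun u => / h u - xi0 * u)
      (fun u => xi u - xi0) a s); [lra | | | intros u Hu; apply Rle_minus, Hxi; lra].
    - intros u Hu; apply continuous_in_Icc_plus with (f := fun u => / h u).
      + apply continuous_in_Icc_comp with (g := Rinv);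
          [apply continuous_in_Icc_sub with a b; [lra | lra | apply Hc; lra]|].
        apply continuous_of_ex_derive; pose proof (Hpos u ltac:(lra)); auto_derive; lra.
      + apply continuous_in_Icc_of_continuous, continuous_of_ex_derive; auto_derive; auto.
    - intros u Hu; pose proof (Hpos u ltac:(lra)).
      replace (xi u - xi0) with (- (- xi u * h u ^ 2) / h u ^ 2 - xi0 * 1) by (field; lra).
      apply (is_derive_minus (fun u => / h u) (fun u => xi0 * u)).
      + apply is_derive_inv; [apply Hd; lra | lra].
      + apply is_derive_scal, (is_derive_id (K := R_AbsRing)). }
  assert (HD : 0 < 1 + xi0 * h a * (s - a)).
  { assert (0 <= xi0 * h a * (s - a)) by (apply Rmult_le_pos; nra); lra. }
  assert (Hinv' : / h s <= (1 + xi0 * h a * (s - a)) / h a).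
  { replace ((1 + xi0 * h a * (s - a)) / h a) with (/ h a + xi0 * (s - a)) by (field; lra).
    lra. }
  apply Rinv_le_contravar in Hinv'; [|apply Rinv_0_lt_compat; lra].
  rewrite Rinv_inv in Hinv'.
  replace (h a / (1 + xi0 * h a * (s - a))) with (/ ((1 + xi0 * h a * (s - a)) / h a))
    by (field; lra).
  exact Hinv'.
Qed.

Lemma forcing_term_bound c l yr yi h : 0 < c -> 0 < l -> 0 < h ->
  4 * yr ^ 2 <= 1 -> yr ^ 2 + yi ^ 2 = l ^ 2 / (2 * h ^ 2) ->
  Rabs (4 * c * yr * yi * h) <= sqrt 2 * c * l.
Proof.
  intros Hc Hl Hh Hyr Hcirc.
  assert (Hyi : yi ^ 2 * h ^ 2 <= l ^ 2 / 2).
  { assert ((yr ^ 2 + yi ^ 2) * h ^ 2 = l ^ 2 / 2) by (rewrite Hcirc; field; lra); nra. }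
  assert (HK : 0 <= sqrt 2 * c * l).
  { pose proof (sqrt_pos 2); apply Rmult_le_pos; [apply Rmult_le_pos |]; lra. }
  rewrite <- (Rabs_pos_eq _ HK); apply Rsqr_le_abs_0; unfold Rsqr.
  replace (sqrt 2 * c * l * (sqrt 2 * c * l)) with (sqrt 2 * sqrt 2 * c ^ 2 * l ^ 2) by ring.
  rewrite sqrt_sqrt by lra.
  assert (0 <= c ^ 2 * (yi ^ 2 * h ^ 2)) by nra.
  nra.
Qed.

Theorem corollaryB2
  (c l w : R) (I : R -> Prop)
  (x yr yi h z x' yr' yi' h' z' : R -> R)
  (tb xi0 t0 : R) :
  0 < c -> 0 < l -> -1 <= w <= 1 ->
  is_interval I ->
  C1_on I x x' -> C1_on I yr yr' -> C1_on I yi yi' ->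
  C1_on I h h' -> C1_on I z z' ->
  (forall t, I t -> 0 < h t) ->
  (forall t, I t -> 0 <= z t) ->
  let xi := fun t => x t ^ 2 + (1 + w) / 2 * z t ^ 2 in
  (forall t, I t -> x' t = (- x t + 4 * c * yr t * yi t + x t * xi t) * h t) ->
  (forall t, I t -> yr' t = (xi t * yr t - c * x t * yi t) * h t) ->
  (forall t, I t -> yi' t = (xi t * yi t + c * x t * yr t) * h t) ->
  (forall t, I t -> z' t = (- ((1 + w) / 2) + xi t) * z t * h t) ->
  (forall t, I t -> h' t = - xi t * h t ^ 2) ->
  (forall t, I t -> x t ^ 2 + 4 * yr t ^ 2 + z t ^ 2 = 1) ->
  (forall t, I t -> yr t ^ 2 + yi t ^ 2 = l ^ 2 / (2 * h t ^ 2)) ->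
  I tb -> 0 < xi0 -> xi tb <= xi0 -> xi0 <= (1 + w) / 2 ->
  I t0 -> tb <= t0 -> xi t0 = xi0 ->
  (forall t, I t -> tb <= t -> xi t = xi0 -> t0 <= t) ->
  forall t, tb <= t <= t0 ->
    Rabs (x t) <=
      1 / Rpower (1 + xi0 * h tb * (t - tb)) (1 / xi0 - 1)
        * (Rabs (x tb) - sqrt 2 * c * l / h tb)
      + sqrt 2 * c * l * (xi0 * (t - tb) + 1 / h tb).
Proof.
  intros Hc Hl Hw HI Cx _ _ Ch Cz Hh _ xi Ex _ _ _ Eh Hsphere Hcircle
    Itb Hxi0 Hxib Hxi0w It0 Htb0 _ Hfirst t Ht.
  assert (HIab : forall u, tb <= u <= t0 -> I u) by (intros u Hu; apply (HI tb u t0); tauto).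
  pose proof (C1_on_continuous_in_Icc I x x' tb t0 HI Itb It0 Cx) as Hxc.
  assert (Hxi_le : forall s, tb <= s <= t0 -> xi s <= xi0).
  { apply le_before_first_hit; [lra | exact Hxib | | ].
    - intros s Hs; apply continuous_in_Icc_plus with (f := fun u => x u ^ 2)
        (g := fun u => (1 + w) / 2 * z u ^ 2).
      + apply continuous_in_Icc_comp with (g := fun y => y ^ 2); [apply Hxc, Hs|].
        apply continuous_of_ex_derive; auto_derive; auto.
      + apply continuous_in_Icc_comp with (g := fun y => (1 + w) / 2 * y ^ 2);
          [apply (C1_on_continuous_in_Icc I z z'); auto|].
        apply continuous_of_ex_derive; auto_derive; auto.
    - intros s Hs Hxs; pose proof (Hfirst s (HIab s Hs) (proj1 Hs) Hxs); lra. }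
  assert (Hh_low : forall s, tb < s < t0 -> h tb / (1 + xi0 * h tb * (s - tb)) <= h s).
  { intros s Hs; apply (riccati_lower_bound h xi tb t0 xi0); [lra | lra | | | | | lra].
    - intros u Hu; apply Hh, HIab, Hu.
    - apply (C1_on_continuous_in_Icc I h h'); auto.
    - intros u Hu; rewrite <- Eh by (apply HIab; lra).
      apply (C1_on_is_derive I h h' tb t0); auto.
    - intros u Hu; apply Hxi_le; lra. }
  apply (abs_damped_forcing_bound x x' h xi (fun s => 4 * c * yr s * yi s * h s) tb t0);
    [lra | apply Hh, Itb | | exact Hxc | apply (C1_on_is_derive I x x'); auto | | |
     exact Hh_low | | exact Ht].
  - pose proof (sqrt_pos 2); apply Rmult_le_pos; [apply Rmult_le_pos |]; lra.
  - intros s Hs; rewrite Ex by (apply HIab; lra); ring.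
  - intros s Hs; apply Hxi_le; lra.
  - intros s Hs; pose proof (Hsphere s (HIab s ltac:(lra))).
    apply forcing_term_bound; auto; [apply Hh, HIab; lra | nra | apply Hcircle, HIab; lra].
Qed.
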